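(* Let $K$ be a compact Hausdorff space, $I$ a set, and $S:c_0(I)\to C(K)$ a linear isometric embedding. Let $\{\xi_i:i\in I\}\subseteq C(K)$ be the image under $S$ of the canonical unit vector basis of $c_0(I)$ and set $G=\bigcap_{i\in I}\xi_i^{-1}(0)$. Then the image of $S$ is complemented in $C(K|G)$.
   Context: $C(K)$ is the Banach space of real-valued continuous functions on $K$ with the supremum norm; for a closed $G\subseteq K$, $C(K|G)$ denotes the closed subspace of functions in $C(K)$ vanishing on $G$. *)

From HB Require Import structures.
From mathcomp Require Import all_boot all_order all_algebra.
From mathcomp Require Import all_classical all_reals all_analysis.
Set Implicit Arguments. Unset Strict Implicit. Unset Printing Implicit Defensive.
Import Order.TTheory GRing.Theory Num.Theory numFieldNormedType.Exports.
Local Open Scope classical_set_scope.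
Local Open Scope ring_scope.

Definition c0 (R : realType) (I : Type) : set (I -> R) :=
  [set x | forall e : R, 0 < e -> finite_set [set i | e <= `|x i|]].

(* supremum norm of a function (0 for an empty domain) *)
Definition supnorm (R : realType) (T : Type) (f : T -> R) : R :=
  sup ([set 0] `|` range (fun t => `|f t|)).

Definition unitvec (R : realType) (I : Type) (i : I) : I -> R :=
  fun j => if pselect (j = i) then 1 else 0.

Definition CK (R : realType) (K : topologicalType) : set (K -> R) :=
  [set f : K -> R | continuous f].

Definition CKG (R : realType) (K : topologicalType) (G : set K) : set (K -> R) :=
  [set f : K -> R | continuous f /\ forall k, G k -> f k = 0].

Definition lin_isometric_embedding (R : realType) (I : Type) (K : topologicalType)
  (S : (I -> R) -> (K -> R)) : Prop :=
  [/\ forall x, c0 x -> CK (S x),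
      forall (a : R) x y, c0 x -> c0 y ->
        S (fun j => a * x j + y j) = (fun k => a * S x k + S y k) &
      forall x, c0 x -> supnorm (S x) = supnorm x].

Definition complemented_in (R : realType) (K : topologicalType)
  (V X : set (K -> R)) : Prop :=
  V `<=` X /\
  exists P : (K -> R) -> (K -> R),
    [/\ forall f, X f -> V (P f),
        forall (a : R) f g, X f -> X g ->
          P (fun k => a * f k + g k) = (fun k => a * P f k + P g k),
        exists M : R, forall f, X f -> supnorm (P f) <= M * supnorm f &
        forall f, V f -> P f = f].

(* Each xi_i has norm one and, K being compact, attains it at a peak point k_i.
   Testing the isometry on e_i + t e_j shows xi_j (k_i) = 0 for j <> i, and then
   S x (k_i) = xi_i (k_i) x_i for every x in c_0(I).  Hence
   f |-> S ((xi_i (k_i) f (k_i))_i) is a norm-one projection of C(K|G) onto the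
   range of S; the family (f (k_i))_i lies in c_0(I) because every cluster point
   of infinitely many k_i lies in G, where f vanishes. *)
From HB Require Import structures.
From mathcomp Require Import all_boot all_order all_algebra.
From mathcomp Require Import all_classical all_reals all_analysis.
Set Implicit Arguments. Unset Strict Implicit. Unset Printing Implicit Defensive.
Import Order.TTheory GRing.Theory Num.Theory numFieldNormedType.Exports.
Local Open Scope classical_set_scope.
Local Open Scope ring_scope.

Section Supnorm.
Variables (R : realType) (T : Type).
Implicit Types (f : T -> R) (B : R).

Lemma supnorm_le f B : 0 <= B -> (forall t, `|f t| <= B) -> supnorm f <= B.
Proof.
move=> B0 fB; apply: ge_sup; first by exists 0; left.
by move=> _ [->|[t _ <-]].
Qed.

Lemma le_supnorm f B : (forall t, `|f t| <= B) -> forall t, `|f t| <= supnorm f.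
Proof.
move=> fB t; apply: ub_le_sup; last by right; exists t.
exists (Num.max 0 B) => _ [->|[s _ <-]]; first by rewrite le_max lexx.
by rewrite le_max fB orbT.
Qed.

Lemma supnorm_ge0 f B : (forall t, `|f t| <= B) -> 0 <= supnorm f.
Proof.
move=> fB; apply: ub_le_sup; last by left.
exists (Num.max 0 B) => _ [->|[s _ <-]]; first by rewrite le_max lexx.
by rewrite le_max fB orbT.
Qed.

End Supnorm.

Section CompactSpace.
Variables (R : realType) (K : topologicalType).
Hypothesis hK : compact [set: K].

Lemma compact_continuous_norm_max (f : K -> R) :
  continuous f -> [set: K] !=set0 -> exists k, forall t, `|f t| <= `|f k|.
Proof.
move=> cf ne.
have cfn : {within [set: K], continuous (fun t => `|f t|)}.
  apply: continuous_subspaceT => t.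
  exact: (continuous_comp (cf t) (@norm_continuous _ _ _)).
have [k _ kmax] := compact_EVT_max ne hK cfn.
by exists k => t; apply: kmax; rewrite inE.
Qed.

Lemma compact_continuous_bounded (f : K -> R) :
  continuous f -> exists B : R, forall t, `|f t| <= B.
Proof.
move=> cf; have [ne|K0] := pselect ([set: K] !=set0).
  by have [k kmax] := compact_continuous_norm_max cf ne; exists `|f k|.
by exists 0 => t; exfalso; apply: K0; exists t.
Qed.

Lemma compact_infinite_cluster (I : Type) (p : I -> K) (J : set I) :
  infinite_set J ->
  exists k : K, forall (N : set K) (D : set I), nbhs k N -> finite_set D ->
    exists2 l, (J `\` D) l & N (p l).
Proof.
move=> infJ; pose F := filter_from (@finite_set I) (fun D => p @` (J `\` D)).
have hF : Filter F.
  apply: filter_from_filter; first by exists set0; exact: finite_set0.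
  move=> D1 D2 fD1 fD2; exists (D1 `|` D2); first by rewrite finite_setU.
  by move=> _ [l [Jl nl] <-]; split; exists l => //; split => // ?; apply: nl;
    [left|right].
have hP : ProperFilter F.
  apply: filter_from_proper hF _ => D fD.
  have [[l Jl]|no] := pselect (exists l, (J `\` D) l); first by exists (p l), l.
  exfalso; apply: infJ; apply: sub_finite_set fD => l Jl.
  by apply: contrapT => nl; apply: no; exists l.
have FT : F [set: K] by exists set0; [exact: finite_set0|].
have [k [_ clk]] := hK hP FT.
exists k => N D kN fD.
have FD : F (p @` (J `\` D)) by exists D.
by have [_ [[l Jl <-] Nl]] := clk _ _ FD kN; exists l.
Qed.

End CompactSpace.

Section C0.
Variables (R : realType) (I : Type).
Implicit Types (x : I -> R) (s : seq {classic I}).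

Lemma c0_finite_support x : finite_set [set j | x j != 0] -> c0 x.
Proof.
move=> fx e e0; apply: sub_finite_set fx => j /= ej.
by apply: contraTneq ej => ->; rewrite normr0 -ltNge.
Qed.

Lemma unitvec_self (i : I) : @unitvec R I i i = 1.
Proof. by rewrite /unitvec; case: (pselect (i = i)). Qed.

Lemma unitvec_other (i j : I) : j <> i -> @unitvec R I i j = 0.
Proof. by move=> ji; rewrite /unitvec; case: (pselect (j = i)). Qed.

Lemma unitvec_c0 (i : I) : c0 (@unitvec R I i).
Proof.
apply: c0_finite_support; apply: sub_finite_set (finite_set1 i) => j /=.
by rewrite /unitvec; destruct (pselect (j = i)) => //; rewrite eqxx.
Qed.

Lemma supnorm_unitvec (i : I) : supnorm (@unitvec R I i) = 1.
Proof.
have le1 j : `|@unitvec R I i j| <= 1.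
  by rewrite /unitvec; destruct (pselect (j = i)); rewrite ?normr1 ?normr0.
apply/eqP; rewrite eq_le supnorm_le //=.
by have := le_supnorm le1 i; rewrite unitvec_self normr1.
Qed.

Definition zero_on s x : I -> R := fun j => if (j : {classic I}) \in s then 0 else x j.

Lemma zero_on_nil x : zero_on [::] x = x.
Proof. by apply/funext => j; rewrite /zero_on in_nil. Qed.

Lemma zero_on_cons a s x :
  zero_on (a :: s) x = (fun j => - zero_on s x a * @unitvec R I a j + zero_on s x j).
Proof.
apply/funext => j; rewrite /zero_on in_cons.
have [->|ja] := eqVneq (j : {classic I}) a.
  by rewrite /= unitvec_self mulr1; case: ifP => _; rewrite ?oppr0 ?add0r // addNr.
by rewrite /= unitvec_other ?mulr0 ?add0r // => ja'; rewrite ja' eqxx in ja.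
Qed.

Lemma c0_zero_on s x : c0 x -> c0 (zero_on s x).
Proof.
move=> cx e e0; apply: sub_finite_set (cx e e0) => j /=.
by rewrite /zero_on; case: ifP => // _; rewrite normr0 leNgt e0.
Qed.

Lemma c0_zero_on_large x e : c0 x -> 0 < e ->
  exists2 s, (forall j : {classic I}, j \in s -> x j != 0)
           & forall j, `|zero_on s x j| <= e.
Proof.
move=> cx e0.
have [s Ds] := (@finite_seqP {classic I} [set j | e <= `|x j|]).1 (cx e e0).
exists s => j.
  move=> js; have : [set` s] j by []; rewrite -Ds /=.
  by apply: contraTneq => ->; rewrite normr0 -ltNge.
rewrite /zero_on; case: ifP => js; first by rewrite normr0 ltW.
rewrite ltW // ltNge; apply/negP => ej.
by have : [set j | e <= `|x j|] j by []; rewrite Ds /= js.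
Qed.

End C0.

Section Embedding.
Variables (R : realType) (K : topologicalType) (I : Type).
Hypothesis hK : compact [set: K].
Variable S : (I -> R) -> (K -> R).
Hypothesis hS : lin_isometric_embedding S.

Local Notation xi i := (S (@unitvec R I i)).
Local Notation G := [set k : K | forall i, xi i k = 0].

Lemma embedding_le_supnorm x k : c0 x -> `|S x k| <= supnorm x.
Proof.
have [hC _ hN] := hS; move=> cx.
have [B hB] := compact_continuous_bounded hK (hC _ cx).
by rewrite -hN //; exact: le_supnorm hB k.
Qed.

Lemma embedding_zero_on_cons a s x : c0 x ->
  S (zero_on (a :: s) x) = (fun k => - zero_on s x a * xi a k + S (zero_on s x) k).
Proof.
have [_ hlin _] := hS; move=> cx.
by rewrite zero_on_cons hlin //; [exact: unitvec_c0|exact: c0_zero_on].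
Qed.

Lemma embedding_zero_on s x k : c0 x ->
  (forall j : {classic I}, j \in s -> xi j k = 0) -> S (zero_on s x) k = S x k.
Proof.
move=> cx; elim: s => [|a s IH] hs; first by rewrite zero_on_nil.
rewrite embedding_zero_on_cons // hs ?mem_head // mulr0 add0r IH // => j js.
by apply: hs; rewrite in_cons js orbT.
Qed.

Lemma embedding_eval_eq0 x k :
  c0 x -> (forall j, x j != 0 -> xi j k = 0) -> S x k = 0.
Proof.
move=> cx hx; apply/eqP; rewrite -normr_le0; apply/ler_addgt0Pl => e e0.
rewrite addr0; have [s sx small] := c0_zero_on_large cx e0.
rewrite -(@embedding_zero_on s) // => [|j /sx]; last exact: hx.
apply: le_trans (embedding_le_supnorm _ (c0_zero_on s cx)) _.
exact: supnorm_le (ltW e0) small.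
Qed.

Lemma embedding_CKG x : c0 x -> CKG G (S x).
Proof.
have [hC _ _] := hS; move=> cx; split; first exact: hC.
by move=> k Gk; apply: embedding_eval_eq0 => // j _; exact: Gk.
Qed.

Lemma xi_le1 i k : `|xi i k| <= 1.
Proof. by rewrite -(@supnorm_unitvec R _ i); exact/embedding_le_supnorm/unitvec_c0. Qed.

Lemma xi_peak i : exists k, `|xi i k| = 1.
Proof.
have [hC _ hN] := hS; have cxi := hC _ (unitvec_c0 i).
have nxi : supnorm (xi i) = 1 by rewrite hN ?supnorm_unitvec //; exact: unitvec_c0.
have [ne|K0] := pselect ([set: K] !=set0); last first.
  have : supnorm (xi i) <= 0.
    by apply: supnorm_le => // t; exfalso; apply: K0; exists t.
  by rewrite nxi ler10.
have [k kmax] := compact_continuous_norm_max hK cxi ne.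
exists k; apply/eqP; rewrite eq_le xi_le1 -nxi /=.
exact: supnorm_le kmax.
Qed.

(* Otherwise e_i + eps c e_j, with eps = xi_i(k) and c = xi_j(k), would be mapped
   to a function of value eps (1 + c^2) at k, exceeding its norm 1. *)
Lemma xi_peak_orth i j k : `|xi i k| = 1 -> j <> i -> xi j k = 0.
Proof.
have [_ hlin _] := hS; move=> hk ji; set c := xi j k.
pose y l := xi i k * c * @unitvec R I j l + @unitvec R I i l.
have cy : c0 y.
  apply: c0_finite_support; apply: (@sub_finite_set _ _ ([set i] `|` [set j])).
    move=> l /=; have [->|li] := pselect (l = i); first by left.
    have [->|lj] := pselect (l = j); first by right.
    by rewrite /y !unitvec_other // mulr0 addr0 eqxx.
  by rewrite finite_setU; split; exact: finite_set1.
have y_le1 l : `|y l| <= 1.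
  rewrite /y; have [->|li] := pselect (l = i).
    by rewrite unitvec_self (unitvec_other R (nesym ji)) mulr0 add0r normr1.
  rewrite (unitvec_other R li) addr0; have [->|lj] := pselect (l = j).
    by rewrite unitvec_self mulr1 normrM hk mul1r xi_le1.
  by rewrite unitvec_other // mulr0 normr0.
have := le_trans (embedding_le_supnorm k cy) (supnorm_le ler01 y_le1).
rewrite /y hlin; [|exact: unitvec_c0|exact: unitvec_c0].
rewrite -/c (_ : _ * c * c + _ = xi i k * (c ^+ 2 + 1)); last first.
  by rewrite mulrDr mulr1 expr2 mulrA.
rewrite normrM hk mul1r ger0_norm ?addr_ge0 ?sqr_ge0 // gerDr => c2.
by apply/eqP; rewrite -sqrf_eq0 eq_le sqr_ge0 c2.
Qed.

Lemma embedding_eval_peak i k x :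
  `|xi i k| = 1 -> c0 x -> S x k = xi i k * x i.
Proof.
move=> hk cx; have cx' := c0_zero_on [:: (i : {classic I})] cx.
have : S (zero_on [:: (i : {classic I})] x) k = 0.
  apply: embedding_eval_eq0 => // j; rewrite /zero_on mem_seq1.
  have [->|ji] := eqVneq (j : {classic I}) i; first by rewrite eqxx.
  by move=> _; apply: xi_peak_orth hk _ => E; rewrite E eqxx in ji.
rewrite embedding_zero_on_cons // zero_on_nil => /eqP.
by rewrite mulNr addrC subr_eq0 mulrC => /eqP.
Qed.

Lemma c0_peak_values (p : I -> K) f :
  (forall i, `|xi i (p i)| = 1) -> CKG G f -> c0 (fun i => xi i (p i) * f (p i)).
Proof.
move=> hp [cf fG] e e0; pose J := [set i | e <= `|f (p i)|].
apply: (@sub_finite_set _ _ J); first by move=> i /=; rewrite normrM hp mul1r.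
apply: contrapT => infJ; have [k clk] := compact_infinite_cluster hK p infJ.
have ek : e <= `|f k|.
  rewrite leNgt; apply/negP => fk; rewrite -subr_gt0 in fk.
  have [l [Jl _]] := clk _ set0 (cf k _ (nbhsx_ballx (f k) _ fk)) (finite_set0 I).
  rewrite /= /ball /= ltrBrDl => fkl.
  have := ler_normB (f k) (f k - f (p l)).
  rewrite opprB addrCA subrr addr0 => /le_lt_trans /(_ fkl).
  by rewrite ltNge Jl.
have Gk : G k.
  move=> j; apply/eqP; apply: contraT => xj; rewrite -normr_gt0 in xj.
  have [hC _ _] := hS; have cxj := hC _ (unitvec_c0 j).
  have [l [_ lj]] := clk _ _ (cxj k _ (nbhsx_ballx _ _ xj)) (finite_set1 j).
  rewrite /= /ball /= (xi_peak_orth (hp l)) ?subr0 ?ltxx // => E; exact: lj (esym E).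
by move: ek; rewrite fG // normr0 leNgt e0.
Qed.

Variable p : I -> K.
Hypothesis hp : forall i, `|xi i (p i)| = 1.

Definition peak_proj (f : K -> R) : K -> R := S (fun i => xi i (p i) * f (p i)).

Lemma peak_proj_linear a f g : CKG G f -> CKG G g ->
  peak_proj (fun k => a * f k + g k) = (fun k => a * peak_proj f k + peak_proj g k).
Proof.
have [_ hlin _] := hS; move=> Gf Gg.
rewrite /peak_proj -hlin; [|exact: c0_peak_values..].
by congr S; apply/funext => i; rewrite mulrDr mulrCA.
Qed.

Lemma peak_proj_le f : CKG G f -> supnorm (peak_proj f) <= supnorm f.
Proof.
have [_ _ hN] := hS; move=> Gf; have [cf _] := Gf.
have [B hB] := compact_continuous_bounded hK cf.
rewrite /peak_proj hN; last exact: c0_peak_values.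
apply: supnorm_le; first exact: supnorm_ge0 hB.
move=> i; rewrite normrM hp mul1r; exact: (le_supnorm hB (p i)).
Qed.

Lemma peak_projK x : c0 x -> peak_proj (S x) = S x.
Proof.
move=> cx; congr S; apply/funext => i.
rewrite (embedding_eval_peak (hp i) cx) mulrA -expr2.
by rewrite -real_normK ?num_real // hp expr1n mul1r.
Qed.

End Embedding.

Theorem lemma2p3 (R : realType) (K : topologicalType) (I : Type)
  (hK : compact [set: K]) (hH : hausdorff_space K)
  (S : (I -> R) -> (K -> R)) (hS : lin_isometric_embedding S) :
  let xi := fun i : I => S (@unitvec R I i) in
  let G := [set k : K | forall i, xi i k = 0] in
  complemented_in (S @` (@c0 R I)) (@CKG R K G).
Proof.
move=> xi G; have [p hp] := choice (xi_peak hK hS).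
split; first by move=> _ [x cx <-]; exact: embedding_CKG.
exists (peak_proj S p); split.
- by move=> f Gf; exists (fun i => xi i (p i) * f (p i)) => //; exact: c0_peak_values.
- exact: peak_proj_linear.
- by exists 1 => f Gf; rewrite mul1r; exact: peak_proj_le.
- by move=> _ [x cx <-]; exact: peak_projK.
Qed.
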